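(* Let $n,k,b,t$ be positive integers with $k\le n$, let $V=\{1,\dots,n\}$, and let $Q_1,\dots,Q_t$ be arbitrary subsets of $V\times\{1,\dots,b\}$. For $1\le i\le t$ and $1\le\beta\le b$ put $Q_{i,\beta}=\{x\in V:(x,\beta)\in Q_i\}$. Let $\mathcal F_k^n$ denote the family of all $k$-element subsets of $V$. Then there exists a subfamily $\mathcal S\subseteq\mathcal F_k^n$ with $|\mathcal S|\ge |\mathcal F_k^n|/2^{bt}$ such that for any two sets $A,B\in\mathcal S$ and all $1\le i\le t$, $1\le\beta\le b$, the number $|A\cap Q_{i,\beta}|$ is odd if and only if $|B\cap Q_{i,\beta}|$ is odd.
   Context: Each $Q_i$ (a ''query'') is interpreted as the set of pairs (station $x$, channel $\beta$) such that station $x$ transmits on channel $\beta$ at time step $i$; a deterministic oblivious algorithm is represented by such a sequence $Q_1,\dots,Q_t$. *)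

From mathcomp Require Import all_boot.
Set Implicit Arguments. Unset Strict Implicit. Unset Printing Implicit Defensive.

Definition Qslice (n b : nat) (Qi : {set 'I_n * 'I_b}) (beta : 'I_b) : {set 'I_n} :=
  [set x | (x, beta) \in Qi].

Definition Fkn (n k : nat) : {set {set 'I_n}} := [set A : {set 'I_n} | #|A| == k].

From mathcomp Require Import all_boot.

(* Pigeonhole: the sets of F_k^n are classified by the vector of parities of
   |A ∩ Q_{i,β}|, which takes at most 2^(bt) values, and the largest class is
   the required family. *)

Lemma card_le_max_fiber (T U : finType) (f : T -> U) (A : {set T}) (u0 : U) :
  exists u, #|A| <= #|[set x in A | f x == u]| * #|U|.
Proof.
have [u _ u_max] := @arg_maxnP U u0 xpredT (fun u => #|[set x in A | f x == u]|) isT.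
exists u.
have -> : #|A| = \sum_(v : U) #|[set x in A | f x == v]|.
  rewrite -sum1_card (partition_big f xpredT) //=.
  by apply: eq_bigr => v _; rewrite -sum1_card; apply: eq_bigl => x; rewrite inE.
by rewrite mulnC -sum_nat_const; apply: leq_sum => v _; apply: u_max.
Qed.

Theorem lemma1 (n k b t : nat) (hn : 0 < n) (hk0 : 0 < k) (hb : 0 < b) (ht : 0 < t)
  (hkn : k <= n) (Q : 'I_t -> {set 'I_n * 'I_b}) :
  exists S : {set {set 'I_n}},
    [/\ S \subset Fkn n k,
        #|Fkn n k| <= #|S| * 2 ^ (b * t)
      & forall A B, A \in S -> B \in S ->
          forall (i : 'I_t) (beta : 'I_b),
            odd #|A :&: Qslice (Q i) beta| = odd #|B :&: Qslice (Q i) beta| ].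
Proof.
pose parities (A : {set 'I_n}) : {ffun 'I_t * 'I_b -> bool} :=
  [ffun p => odd #|A :&: Qslice (Q p.1) p.2|].
have [s large] := @card_le_max_fiber _ _ parities (Fkn n k) [ffun => false].
have card_parities : #|{ffun 'I_t * 'I_b -> bool}| = 2 ^ (b * t).
  by rewrite card_ffun card_prod !card_ord card_bool mulnC.
exists [set A in Fkn n k | parities A == s]; split.
- by apply/subsetP => A; rewrite inE => /andP[].
- by rewrite -card_parities.
- move=> A B; rewrite !inE => /andP[_ /eqP sA] /andP[_ /eqP sB] i beta.
  have := congr1 (fun f : {ffun _ -> bool} => f (i, beta)) (etrans sA (esym sB)).
  by rewrite !ffunE.
Qed.
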